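(* Let $\mathcal{P}$ be a set of $d$-dimensional $k$-templates and let $X$ be an infinite set. If $\mathcal{P}=\varnothing$, then $\chi(L(X^d,\mathcal{P}))=1$. If $\mathcal{P}\ne\varnothing$, then $\chi(L(X^d,\mathcal{P}))=|X|^{-(e-1)}$, where $e=\min\{e(P):P\in\mathcal{P}\}$.
   Context: A $d$-dimensional $k$-template ($2\le k<\omega$, $d<\omega$) is a set $P$ of $d$-tuples with $|P|=k$. A homomorphism between $d$-dimensional $k$-templates $P\to Q$ is a one-to-one map $f$ such that whenever $x,y\in P$, $i<d$ and $x_i=y_i$, then $f(x)_i=f(y)_i$; $Q$ is a homomorphic image of $P$ if such $f$ exists. For a set $\mathcal{P}$ of $d$-dimensional $k$-templates, $L(X^d,\mathcal{P})$ is the $k$-hypergraph with vertex set $X^d$ whose edges are the $k$-element subsets $Q\subseteq X^d$ that are homomorphic images of some $P\in\mathcal{P}$. A subset $I\subseteq d=\{0,\dots,d-1\}$ is a distinguisher for $P$ if whenever $x,y\in P$ are distinct then $x_i\ne y_i$ for some $i\in I$; $e(P)$ is the least cardinality of a distinguisher for $P$. A coloring $\varphi:V\to C$ of a $k$-hypergraph $(V,E)$ is proper if no edge is monochromatic; $\chi(H)$ is the least cardinal $\kappa$ admitting a proper $\kappa$-coloring. For an infinite cardinal $\kappa$ and $m<\omega$, $\kappa^{+m}$ is the $m$-th successor of $\kappa$, and $\kappa^{-m}$ is the least cardinal $\lambda$ with $\lambda^{+m}\ge\kappa$. *)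

From mathcomp Require Import all_boot.
Unset Printing Implicit Defensive.

Definition is_template (d k : nat) (P : seq (d.-tuple nat)) : Prop :=
  uniq P /\ size P = k.

Definition template_hom (d : nat) (X : Type) (P : seq (d.-tuple nat))
  (f : d.-tuple nat -> ('I_d -> X)) : Prop :=
  (forall x y, x \in P -> y \in P -> f x = f y -> x = y) /\
  (forall x y (i : 'I_d), x \in P -> y \in P -> tnth x i = tnth y i ->
      f x i = f y i).

Definition L_edge (d : nat) (X : Type) (Pc : seq (d.-tuple nat) -> Prop)
  (Q : ('I_d -> X) -> Prop) : Prop :=
  exists P f, Pc P /\ template_hom d X P f /\
    (forall q, Q q <-> exists2 x, x \in P & q = f x).

Definition proper_coloring (d : nat) (X C : Type)
  (Pc : seq (d.-tuple nat) -> Prop) (phi : ('I_d -> X) -> C) : Prop :=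
  forall Q, L_edge d X Pc Q -> ~ (exists c, forall q, Q q -> phi q = c).

Definition has_proper_coloring (d : nat) (X : Type)
  (Pc : seq (d.-tuple nat) -> Prop) (C : Type) : Prop :=
  exists phi : ('I_d -> X) -> C, proper_coloring d X C Pc phi.

(* Distinguisher and e(P): I is a distinguisher for P if distinct x, y in P
   differ at some coordinate i in I; e(P) is the least size of one
   (the full index set is always one, so d is a safe default). *)
Definition distinguisher (d : nat) (P : seq (d.-tuple nat)) (I : {set 'I_d}) : bool :=
  all (fun x => all (fun y => (x == y) || [exists i in I, tnth x i != tnth y i]) P) P.

Definition eP (d : nat) (P : seq (d.-tuple nat)) : nat :=
  \big[minn/d]_(I : {set 'I_d} | distinguisher d P I) #|I|.

Definition infinite (X : Type) : Prop :=
  ~ exists l : seq X, forall x : X, exists2 i, i < size l & nth x l i = x.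


Definition card_le (A B : Type) : Prop := exists f : A -> B, injective f.
Definition card_lt (A B : Type) : Prop := card_le A B /\ ~ card_le B A.

(* chain m A X : there are cardinals |A| < nu_1 < ... < nu_m < |X|
   (each nu_i < |X| is realized by a subset of X).  Thus
   |A|^{+m} >= |X|  <->  ~ chain m A X, i.e. |A| >= |X|^{-m} <-> ~ chain m A X. *)
Fixpoint chain (m : nat) (A X : Type) : Prop :=
  match m with
  | 0 => card_lt A X
  | m'.+1 => exists S : X -> Prop, card_lt A {x : X | S x} /\ chain m' {x : X | S x} X
  end.

(* Let m = e - 1 and let J be a distinguisher of size e of a template P
   attaining e.

   If |C| < nu_1 < ... < nu_m < |X|, choose the coordinates in J one at a
   time from subsets of X of sizes nu_1, ..., nu_m, |X| (or from large finite
   sets when C is finite): iterated pigeonhole makes every C-coloring of X^d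
   constant on a grid of (n + 1)-element sets indexed by J, where n bounds the
   entries of P; this grid contains an injective homomorphic image of P, a
   monochromatic edge.

   Conversely, if there is no such chain, induction on m gives a coloring of
   X^d by C and supports supp c of size at most m such that two points of
   color c already differ on supp c.  For m = 0 inject X^d into C; for the
   step, well-order X in type |X|, color p inside the initial segment below
   its largest coordinate and add the index of that coordinate to the
   support.  A monochromatic edge of color c would make supp c a
   distinguisher of size < e.

   The cardinal arithmetic uses comparability of cardinals and Hessenberg's
   |Y * Y| = |Y|, both proved with Zorn's lemma. *)

From HB Require Import structures.
From mathcomp Require Import all_boot.
From mathcomp Require Import boolp.
From mathcomp Require classical_sets wochoice.

Set Implicit Arguments.
Unset Strict Implicit.

Lemma card_le_refl A : card_le A A.
Proof. by exists id. Qed.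

Lemma card_le_trans A B C : card_le A B -> card_le B C -> card_le A C.
Proof. by move=> [f f_inj] [g g_inj]; exists (g \o f); apply: inj_comp. Qed.

Lemma card_lt_le_trans A B C : card_lt A B -> card_le B C -> card_lt A C.
Proof.
move=> [AB nBA] BC; split; first exact: card_le_trans AB BC.
by move=> CA; apply: nBA; apply: card_le_trans BC CA.
Qed.

Lemma card_le_lt_trans A B C : card_le A B -> card_lt B C -> card_lt A C.
Proof.
move=> AB [BC nCB]; split; first exact: card_le_trans AB BC.
by move=> CA; apply: nCB; apply: card_le_trans CA AB.
Qed.

Lemma sval_inj (T : Type) (P : T -> Prop) : injective (@proj1_sig T P).
Proof. by move=> [x px] [y py] /= xy; apply: eq_exist. Qed.

Lemma card_le_sig (T : Type) (P : T -> Prop) : card_le {x | P x} T.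
Proof. by exists sval; apply: sval_inj. Qed.

Lemma sig_card_le (T : Type) (P Q : T -> Prop) :
  card_le {x | P x} {x | Q x} ->
  exists h : T -> T, (forall x, P x -> Q (h x)) /\
    (forall x y, P x -> P y -> h x = h y -> x = y).
Proof.
move=> [f f_inj].
exists (fun x => if pselect (P x) is left px then sval (f (exist _ x px)) else x).
split=> [x px|x y px py]; first by case: pselect => // {}px; apply: svalP.
case: pselect => [{}px|//]; case: pselect => [{}py|//].
by move/sval_inj/f_inj/(congr1 sval).
Qed.

(** * Comparability of cardinals *)

Definition partial_inj (A B : Type) (G : A * B -> Prop) :=
  forall p q, G p -> G q -> (p.1 = q.1 <-> p.2 = q.2).

Lemma partial_inj_card_le (A B : Type) (G : A * B -> Prop) :
  partial_inj G -> (forall a, exists b, G (a, b)) -> card_le A B.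
Proof.
move=> Ginj Gtot; exists (fun a => sval (cid (Gtot a))) => a a' e.
by apply/(Ginj (a, _) (a', _) (svalP (cid (Gtot a))) (svalP (cid (Gtot a')))).
Qed.

Lemma partial_inj_swap (A B : Type) (G : A * B -> Prop) :
  partial_inj G -> partial_inj (fun p : B * A => G (p.2, p.1)).
Proof. by move=> Ginj p q Gp Gq; split => /(Ginj _ _ Gp Gq). Qed.

Lemma partial_inj_bigcup (A B : Type) (F : (A * B -> Prop) -> Prop) :
  classical_sets.total_on F classical_sets.subset ->
  (forall G, F G -> partial_inj G) ->
  partial_inj (fun p => exists2 G, F G & G p).
Proof.
move=> Ftot Finj p q [G FG Gp] [H FH Hq].
have [GH|HG] := Ftot _ _ FG FH; first exact: Finj (GH _ Gp) Hq.
exact: Finj Gp (HG _ Hq).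
Qed.

Lemma card_le_total A B : card_le A B \/ card_le B A.
Proof.
have [|G [Ginj Gmax]] := @classical_sets.Zorn_bigcup (A * B) (@partial_inj A B).
  by move=> F FP Ftot; apply: partial_inj_bigcup.
case: (pselect (forall a, exists b, G (a, b))) => [Gtot|/existsNP [a aG]].
  by left; apply: partial_inj_card_le Gtot.
right; apply: partial_inj_card_le (partial_inj_swap Ginj) _ => b.
apply: contrapT => /forallNP bG; apply: (Gmax (fun p => G p \/ p = (a, b))).
  split=> [p|]; first by left.
  by move/(_ (a, b) (or_intror erefl)) => Gab; apply: aG; exists b.
have fresh p : G p -> p.1 <> a /\ p.2 <> b.
  case: p => x y Gxy; split=> /= [xa|yb]; first by apply: aG; exists y; rewrite -xa.
  by apply: (bG x); rewrite -yb.
move=> p q [Gp|->] [Gq|->] //=; first exact: Ginj.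
  by have [] := fresh p Gp; split.
by have [] := fresh q Gq; split=> /esym.
Qed.

Lemma card_le_of_not_lt A B : ~ card_lt A B -> card_le B A.
Proof.
move=> nAB; apply: contrapT => nBA; apply: nAB; split=> //.
by have [|/nBA] := card_le_total A B.
Qed.

Definition finite (A : Type) := exists M, card_le A 'I_M.

Lemma finite_card_le A B : card_le A B -> finite B -> finite A.
Proof. by move=> AB [M BM]; exists M; apply: card_le_trans AB BM. Qed.

Lemma finite_finType (T : finType) : finite T.
Proof. by exists #|T|; exists enum_rank; apply: enum_rank_inj. Qed.

Lemma card_le_ord_leq N K : card_le 'I_N 'I_K -> N <= K.
Proof. by move=> [f f_inj]; have := leq_card f f_inj; rewrite !card_ord. Qed.

Lemma infinite_not_finite X : infinite X -> ~ finite X.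
Proof.
move=> Xinf [M [f f_inj]]; apply: Xinf.
have [[x0]|nX] := pselect (inhabited X); last by exists [::] => x; case: nX.
pose pre (i : 'I_M) : X :=
  if pselect (exists x, f x = i) is left h then sval (cid h) else x0.
exists (map pre (enum 'I_M)) => x.
exists (f x); first by rewrite size_map size_enum_ord.
rewrite (nth_map (f x)) ?size_enum_ord // nth_ord_enum /pre.
case: pselect => [h|[]]; last by exists x.
by case: (cid h) => y /= /f_inj.
Qed.

Section NatEmbedding.
Variables (Y : Type) (Yinf : ~ finite Y).
Local Notation W := {classic Y}.

Lemma exists_notin (s : seq W) : exists x : W, x \notin s.
Proof.
apply: contrapT => /forallNP all_in; apply: Yinf; exists (size s).
have in_s (x : W) : x \in s by apply/negPn/negP/all_in.
exists (fun x => Ordinal (etrans (index_mem x s) (in_s x))) => x y [].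
by move=> /(congr1 (nth (x : W) s)); rewrite !(@nth_index W).
Qed.

Fixpoint fresh_prefix n : seq W :=
  if n is n'.+1 then rcons (fresh_prefix n') (xchoose (exists_notin (fresh_prefix n')))
  else [::].

Definition nat_embedding n : W := xchoose (exists_notin (fresh_prefix n)).

Lemma fresh_prefixE n : fresh_prefix n = map nat_embedding (iota 0 n).
Proof.
by elim: n => // n IH; rewrite -[n.+1]addn1 iotaD map_cat cats1 -IH add0n addn1.
Qed.

Lemma nat_embedding_inj : injective nat_embedding.
Proof.
suff lt_neq m n : m < n -> nat_embedding m <> nat_embedding n.
  by move=> m n mn; case: (ltngtP m n) => // /lt_neq; [|move=> /(_ (esym mn))].
move=> mn e; have /negP[] : nat_embedding n \notin fresh_prefix n.
  exact: xchooseP (exists_notin (fresh_prefix n)).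
by rewrite fresh_prefixE -e map_f // mem_iota.
Qed.

End NatEmbedding.

Lemma card_le_nat Y : ~ finite Y -> card_le nat Y.
Proof. by move=> Yinf; exists (nat_embedding Yinf); apply: nat_embedding_inj. Qed.

Lemma card_le_ord Y n : ~ finite Y -> card_le 'I_n Y.
Proof. by move=> /card_le_nat; apply: card_le_trans; exists val; apply: val_inj. Qed.

Lemma infinite_inhabited C : ~ finite C -> C.
Proof. by move=> /(@card_le_ord C 1) /cid [f _]; exact: f ord0. Qed.

(** * Hessenberg's theorem *)

Section Hessenberg.
Variables (Y : Type) (n : nat -> Y).
Hypothesis n_inj : injective n.

Definition pair_dom (G : Y * Y * Y -> Prop) a b := exists c, G ((a, b), c).
Definition pair_carrier G a := pair_dom G a a.

(* The premise [exists p, G p] admits the empty graph, so that the union of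
   the empty chain is a pairing graph as well. *)
Definition pairing_graph G := [/\ partial_inj G,
  forall a b, pair_dom G a b <-> pair_carrier G a /\ pair_carrier G b,
  forall u c, G (u, c) -> pair_carrier G c &
  (exists p, G p) -> forall k, pair_carrier G (n k)].

Lemma pairing_graph_bigcup (F : (Y * Y * Y -> Prop) -> Prop) :
  classical_sets.total_on F classical_sets.subset ->
  (forall G, F G -> pairing_graph G) ->
  pairing_graph (fun p => exists2 G, F G & G p).
Proof.
set U := fun p => _; move=> Ftot Fpair.
have carrierU G a : F G -> pair_carrier G a -> pair_carrier U a.
  by move=> FG [c Gc]; exists c, G.
split.
- by apply: partial_inj_bigcup => // G /Fpair[].
- move=> a b; split=> [[c [G FG Gabc]]|[[ca [G FG Ga]] [cb [H FH Hb]]]].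
    have [_ domG _ _] := Fpair G FG.
    by have [|Ga Gb] := (domG a b).1; [exists c | split; apply: (carrierU _ _ FG)].
  suff [K FK [Ka Kb]] : exists2 K, F K & pair_carrier K a /\ pair_carrier K b.
    by have [_ /(_ a b) [_ /(_ (conj Ka Kb)) [c Kc]] _ _] := Fpair K FK; exists c, K.
  have [GH|HG] := Ftot G H FG FH.
    by exists H => //; split; [exists ca; apply: GH | exists cb].
  by exists G => //; split; [exists ca | exists cb; apply: HG].
- move=> u c [G FG Guc]; have [_ _ /(_ u c Guc) Gc _] := Fpair G FG.
  exact: (carrierU _ _ FG).
- move=> [p [G FG Gp]] k; have [_ _ _ /(_ (ex_intro _ p Gp) k)] := Fpair G FG.
  exact: carrierU.
Qed.

Definition nat_pairing p := exists i j, p = ((n i, n j), n (pickle (i, j))).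

Lemma nat_pairing_graph : pairing_graph nat_pairing.
Proof.
have carrierP a : pair_carrier nat_pairing a <-> exists i, a = n i.
  split=> [[c [i [j [-> _ _]]]]|[i ->]]; first by exists i.
  by exists (n (pickle (i, i))), i, i.
split.
- move=> _ _ [i [j ->]] [i' [j' ->]] /=; split=> [[/n_inj -> /n_inj ->] //|].
  by move=> /n_inj /(pcan_inj (@pickleK _)) [-> ->].
- move=> a b; split=> [[c [i [j [-> -> _]]]]|[/carrierP [i ->] /carrierP [j ->]]].
    by split; apply/carrierP; [exists i | exists j].
  by exists (n (pickle (i, j))), i, j.
- by move=> u c [i [j [_ ->]]]; apply/carrierP; exists (pickle (i, j)).
- by move=> _ k; apply/carrierP; exists k.
Qed.

Section MaximalPairing.
Variable G : Y * Y * Y -> Prop.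
Hypotheses (Gpair : pairing_graph G) (Gne : exists p, G p).
Local Notation D := (pair_carrier G).

Lemma pairing_carrier_nat k : D (n k).
Proof. by case: Gpair => _ _ _; apply. Qed.

Lemma pairing_fun : {g : Y -> Y -> Y | forall a b, D a -> D b -> G ((a, b), g a b)}.
Proof.
exists (fun a b => if pselect (pair_dom G a b) is left h then sval (cid h) else a).
move=> a b Da Db; have [_ /(_ a b) [_ /(_ (conj Da Db)) dom] _ _] := Gpair.
by case: pselect => // h; exact: (svalP (cid h)).
Qed.

Local Notation g := (sval pairing_fun).

Lemma pairing_fun_carrier a b : D a -> D b -> D (g a b).
Proof. by move=> Da Db; case: Gpair => _ _ + _; apply; apply: (svalP pairing_fun). Qed.

Lemma pairing_fun_inj a b a' b' : D a -> D b -> D a' -> D b' ->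
  g a b = g a' b' -> a = a' /\ b = b'.
Proof.
move=> Da Db Da' Db' e; case: Gpair => Ginj _ _ _.
have Gab := svalP pairing_fun a b Da Db; have Gab' := svalP pairing_fun a' b' Da' Db'.
by have [_ /(_ e) [-> ->]] := Ginj _ _ Gab Gab'.
Qed.

Lemma card_le_prod_small_complement :
  card_le {y | ~ D y} {y | D y} -> card_le (Y * Y) Y.
Proof.
move=> /sig_card_le [h [hD h_inj]].
pose j y := if pselect (D y) then g y (n 0) else g (h y) (n 1).
have Dj y : D (j y).
  by rewrite /j; case: pselect => [Dy|nDy]; apply: pairing_fun_carrier;
    [| apply: pairing_carrier_nat | apply: hD | apply: pairing_carrier_nat].
have j_inj : injective j.
  have [D0 D1] := (pairing_carrier_nat 0, pairing_carrier_nat 1).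
  move=> y y'; rewrite /j; case: pselect => [Dy|nDy]; case: pselect => [Dy'|nDy'].
  - by case/(pairing_fun_inj Dy D0 Dy' D0).
  - by case/(pairing_fun_inj Dy D0 (hD _ nDy') D1) => _ /n_inj.
  - by case/(pairing_fun_inj (hD _ nDy) D1 Dy' D0) => _ /n_inj.
  - by case/(pairing_fun_inj (hD _ nDy) D1 (hD _ nDy') D1) => /h_inj ->.
exists (fun p => g (j p.1) (j p.2)) => [[a b] [a' b']] /=.
by case/(pairing_fun_inj (Dj a) (Dj b) (Dj a') (Dj b')) => /j_inj -> /j_inj ->.
Qed.

Lemma pairing_dom_carrier u c : G (u, c) -> D u.1 /\ D u.2.
Proof. by case: u => a b Gabc; case: Gpair => _ /(_ a b) [+ _] _ _; apply; exists c. Qed.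

Section Extension.
Variables (E : Y -> Prop) (k : Y -> Y -> Y).

Definition new_pair a b := [/\ D a \/ E a, D b \/ E b & ~ (D a /\ D b)].

Hypotheses (E_fresh : forall y, E y -> ~ D y)
  (k_new : forall a b, new_pair a b -> E (k a b))
  (k_inj : forall a b a' b', new_pair a b -> new_pair a' b' ->
     k a b = k a' b' -> a = a' /\ b = b').

Definition pairing_extension p := G p \/ new_pair p.1.1 p.1.2 /\ p.2 = k p.1.1 p.1.2.

Lemma pairing_extension_dom a b :
  pair_dom pairing_extension a b <-> (D a /\ D b) \/ new_pair a b.
Proof.
split=> [[c [/pairing_dom_carrier|[]]]|[Dab|nab]]; [by left|by right| |].
  by case: Gpair => _ /(_ a b) [_ /(_ Dab) [c Gc]] _ _; exists c; left.
by exists (k a b); right.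
Qed.

Lemma pairing_extension_carrier a : pair_carrier pairing_extension a <-> D a \/ E a.
Proof.
rewrite /pair_carrier pairing_extension_dom.
split=> [[[Da _]|[]] //|[Da|Ea]]; [by left | by left |].
by right; split; [right | right | case=> Da _; apply: E_fresh Ea Da].
Qed.

Lemma pairing_graph_extension : pairing_graph pairing_extension.
Proof.
have Gnew p q : G p -> new_pair q.1.1 q.1.2 /\ q.2 = k q.1.1 q.1.2 ->
    p.1 <> q.1 /\ p.2 <> q.2.
  case: p q => [[a b] c] [[a' b'] c'] Gp /= [nab' ->].
  have [/= Da Db] := pairing_dom_carrier Gp; split=> [[ea eb]|ck].
    by case: nab' => _ _ []; rewrite -ea -eb.
  by case: Gpair => _ _ /(_ _ _ Gp) + _; rewrite ck; apply: E_fresh; apply: k_new.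
split.
- move=> p q [Gp|np] [Gq|nq]; first by case: Gpair => + _ _ _; apply.
  + by have [] := Gnew p q Gp nq; split.
  + by have [] := Gnew q p Gq np; split=> /esym.
  case: p q np nq => [[a b] c] [[a' b'] c'] /= [nab ->] [nab' ->].
  by split=> [[-> ->] //|/(k_inj nab nab') [-> ->]].
- move=> a b; rewrite pairing_extension_dom !pairing_extension_carrier.
  split=> [[[Da Db]|[]]|[Da Db]]; [by split; left|by []|].
  by case: (pselect (D a /\ D b)) => [|nD]; [left|right].
- move=> u c; rewrite pairing_extension_carrier => -[Guc|[/k_new + /= ->]]; last by right.
  by left; case: Gpair => _ _ /(_ _ _ Guc).
- by move=> _ i; apply/pairing_extension_carrier; left; apply: pairing_carrier_nat.
Qed.

Lemma pairing_extension_proper :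
  (exists y, E y) -> classical_sets.proper G pairing_extension.
Proof.
move=> [y Ey]; split=> [p|sub]; first by left.
have [c /sub /pairing_dom_carrier [/= Dy _]] : pair_carrier pairing_extension y.
  by apply/pairing_extension_carrier; right.
exact: E_fresh Ey Dy.
Qed.

End Extension.

Section LargeComplement.
Variable h : Y -> Y.
Hypotheses (hD : forall y, D y -> ~ D (h y))
  (h_inj : forall x y, D x -> D y -> h x = h y -> x = y).

Definition h_image y := exists2 a, D a & h a = y.

Definition h_preim y :=
  if pselect (h_image y) is left e then s2val (cid2 e) else y.

Lemma h_preimP y : h_image y -> D (h_preim y) /\ h (h_preim y) = y.
Proof. by rewrite /h_preim; case: pselect => // e _; case: (cid2 e). Qed.

Lemma h_image_fresh y : h_image y -> ~ D y.
Proof. by case=> a Da <-; apply: hD. Qed.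

Definition retract a := if `[< D a >] then a else h_preim a.

Lemma retract_carrier a : D a \/ h_image a -> D (retract a).
Proof.
rewrite /retract; case: (asboolP (D a)) => // nDa [//|].
by case/h_preimP.
Qed.

Lemma retract_inj a a' : D a \/ h_image a -> D a' \/ h_image a' ->
  `[< D a >] = `[< D a' >] -> retract a = retract a' -> a = a'.
Proof.
move=> Ea Ea' eD; rewrite /retract -eD; case: (asboolP (D a)) => // nDa.
have nDa' : ~ D a' by move/asboolP; rewrite -eD => /asboolP.
case: Ea Ea' => [//|/h_preimP [_ ea]] [//|/h_preimP [_ ea']] e.
by rewrite -ea -ea' e.
Qed.

(* A pair not inside D is coded in h(D): retract both coordinates to D, pair
   them, and pair the result with a tag recording which coordinates lay in D. *)
Definition pair_code a b :=
  h (g (g (retract a) (retract b)) (n (`[< D a >] + `[< D b >].*2))).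

Lemma pair_code_carrier a b t : D a \/ h_image a -> D b \/ h_image b ->
  D (g (g (retract a) (retract b)) (n t)).
Proof.
move=> Ea Eb; apply: pairing_fun_carrier; last exact: pairing_carrier_nat.
by apply: pairing_fun_carrier; apply: retract_carrier.
Qed.

Lemma pair_code_new a b : new_pair h_image a b -> h_image (pair_code a b).
Proof.
case=> Ea Eb _; rewrite /pair_code; set t := _ + _.
by exists (g (g (retract a) (retract b)) (n t)); first exact: pair_code_carrier.
Qed.

Lemma pair_code_inj a b a' b' : new_pair h_image a b -> new_pair h_image a' b' ->
  pair_code a b = pair_code a' b' -> a = a' /\ b = b'.
Proof.
case=> Ea Eb _ [Ea' Eb' _].
move/h_inj => /(_ (pair_code_carrier _ Ea Eb) (pair_code_carrier _ Ea' Eb')).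
have Dr := retract_carrier.
case/(pairing_fun_inj (pairing_fun_carrier (Dr _ Ea) (Dr _ Eb)) (pairing_carrier_nat _)
  (pairing_fun_carrier (Dr _ Ea') (Dr _ Eb')) (pairing_carrier_nat _)) => + /n_inj.
case/(pairing_fun_inj (Dr _ Ea) (Dr _ Eb) (Dr _ Ea') (Dr _ Eb')) => ra rb.
have tag_inj (u v u' v' : bool) : u + v.*2 = u' + v'.*2 -> u = u' /\ v = v'.
  by case: u v u' v' => [] [] [] [].
by case/tag_inj => da db; split; apply: retract_inj.
Qed.

End LargeComplement.

End MaximalPairing.
End Hessenberg.

Lemma card_le_prod_self Y : ~ finite Y -> card_le (Y * Y) Y.
Proof.
move=> /card_le_nat [n n_inj].
have [|G [Gpair Gmax]] := @classical_sets.Zorn_bigcup _ (pairing_graph n).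
  by move=> F FP Ftot; apply: pairing_graph_bigcup.
have Gne : exists p, G p.
  apply: contrapT => /forallNP G0; apply: (Gmax _ _ (nat_pairing_graph n_inj)).
  split=> [p /G0 //|sub]; apply: (G0 ((n 0, n 0), n (pickle (0, 0)))).
  by apply: sub; exists 0, 0.
have [small|/sig_card_le [h [hD h_inj]]] :=
  card_le_total {y | ~ pair_carrier G y} {y | pair_carrier G y}.
  exact: (@card_le_prod_small_complement Y n n_inj G Gpair Gne small).
have E_fresh := h_image_fresh hD.
have Ene : exists y, h_image G h y.
  by exists (h (n 0)), (n 0); first exact: pairing_carrier_nat.
case: (Gmax _ (pairing_extension_proper Gpair (pair_code Gpair h) E_fresh Ene)).
apply: (pairing_graph_extension Gpair Gne E_fresh).
  exact: pair_code_new.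
exact: pair_code_inj.
Qed.

Lemma card_le_prod_map A B A' B' :
  card_le A A' -> card_le B B' -> card_le (A * B) (A' * B').
Proof.
move=> [f f_inj] [g g_inj]; exists (fun p => (f p.1, g p.2)).
by move=> [a b] [a' b'] [] /f_inj -> /g_inj ->.
Qed.

Lemma card_le_prod A B C :
  ~ finite C -> card_le A C -> card_le B C -> card_le (A * B) C.
Proof.
move=> Cinf hA hB.
exact: card_le_trans (card_le_prod_map hA hB) (card_le_prod_self Cinf).
Qed.

Lemma card_le_prod_ord C n : ~ finite C -> card_le (C * 'I_n) C.
Proof. by move=> Cinf; apply: card_le_prod (card_le_refl C) (card_le_ord _ Cinf). Qed.

Lemma card_le_fun_ord C n : ~ finite C -> card_le ('I_n -> C) C.
Proof.
move=> Cinf; elim: n => [|n IH].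
  exists (fun _ => infinite_inhabited Cinf) => f g _.
  by apply: funext => -[].
apply: card_le_trans (card_le_prod Cinf (card_le_refl C) IH).
exists (fun f => (f ord0, fun i => f (lift ord0 i))) => f g [e0 e].
apply: funext => i; case: (unliftP ord0 i) => [j ->|->] //.
exact: (congr1 (fun h => h j) e).
Qed.

Lemma card_le_tuple S C n : ~ finite C -> card_le S C -> card_le (n.-tuple S) C.
Proof.
move=> Cinf [f f_inj]; apply: card_le_trans (card_le_fun_ord n Cinf).
exists (fun t i => f (tnth t i)) => t t' e; apply: eq_from_tnth => i.
exact/f_inj/(congr1 (fun h => h i) e).
Qed.

Lemma card_le_option C : ~ finite C -> card_le (option C) C.
Proof.
move=> Cinf; apply: card_le_trans (card_le_prod_ord 2 Cinf).
pose c0 := infinite_inhabited Cinf.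
exists (fun o => if o is Some c then (c, ord0) else (c0, ord_max)).
by move=> [a|] [b|] //= [] ->.
Qed.

Lemma finite_prod A B : finite A -> finite B -> finite (A * B).
Proof.
move=> [M AM] [K BK]; apply: finite_card_le (card_le_prod_map AM BK) _.
exact: finite_finType.
Qed.

Lemma finite_tuple S n : finite S -> finite (n.-tuple S).
Proof.
move=> [M [f f_inj]].
apply: (@finite_card_le _ (n.-tuple 'I_M)); last exact: finite_finType.
exists (map_tuple f) => t t' /(congr1 val) /(inj_map f_inj) e.
exact: val_inj.
Qed.

Lemma finite_option S : finite S -> finite (option S).
Proof.
move=> [M [f f_inj]].
apply: (@finite_card_le _ (option 'I_M)); last exact: finite_finType.
by exists (omap f) => [[a|] [b|]] //= [] /f_inj ->.
Qed.

Section SubtypeImage.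
Variables (T Y : Type) (f : T -> Y) (U : T -> Prop).

Definition sub_image y := exists2 t, U t & f t = y.

Lemma card_le_sub_image : injective f -> card_le {t | U t} {y | sub_image y}.
Proof.
move=> f_inj.
exists (fun t => exist sub_image (f (sval t)) (ex_intro2 _ _ _ (svalP t) erefl)).
by move=> t t' /(congr1 sval) /f_inj /sval_inj.
Qed.

Lemma sub_image_card_le : card_le {y | sub_image y} {t | U t}.
Proof.
pose pre (y : {y | sub_image y}) := cid2 (svalP y).
exists (fun y => exist U (s2val (pre y)) (s2valP (pre y))).
move=> [y py] [y' py'] /(congr1 sval) /= e; apply: sval_inj => /=.
move: (s2valP' (pre (exist _ y py))) (s2valP' (pre (exist _ y' py'))) => /= fy fy'.
by rewrite -fy -fy' e.
Qed.

End SubtypeImage.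

Lemma chain_le_base m A A' Y : card_le A' A -> chain m A Y -> chain m A' Y.
Proof.
case: m => [|m] /= A'A; first exact: card_le_lt_trans.
by move=> [S [AS ch]]; exists S; split => //; apply: card_le_lt_trans A'A AS.
Qed.

Lemma chain_le_top m A Y Y' : card_le Y' Y -> chain m A Y' -> chain m A Y.
Proof.
move=> Y'Y; elim: m A => [|m IH] A /=; first by move/card_lt_le_trans; apply.
case: Y'Y => f f_inj [S [AS ch]]; exists (sub_image f S); split.
  exact: card_lt_le_trans AS (card_le_sub_image S f_inj).
exact: chain_le_base (sub_image_card_le f S) (IH _ ch).
Qed.

Lemma chain_extend m A Y (S : Y -> Prop) :
  chain m A {x | S x} -> card_lt {x | S x} Y -> chain m.+1 A Y.
Proof.
elim: m A => [|m IH] A; first by exists S.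
move=> [U [AU ch]] SY; exists (sub_image sval U); split.
  exact: card_lt_le_trans AU (card_le_sub_image U (@sval_inj _ _)).
exact: chain_le_base (sub_image_card_le sval U) (IH _ ch SY).
Qed.

Lemma exists_finite_subtype_gt X B : ~ finite X -> finite B ->
  exists S : X -> Prop, finite {x | S x} /\ card_lt B {x | S x}.
Proof.
move=> Xinf [M BM]; have [g g_inj] := cid (@card_le_ord X M.+1 Xinf).
pose S := sub_image g (fun _ => True).
have ord_S : card_le 'I_M.+1 {x | S x}.
  exists (fun i => exist _ (g i) (ex_intro2 _ _ i I erefl)).
  by move=> i j /(congr1 sval) /g_inj.
exists S; split.
  exists M.+1; apply: card_le_trans (sub_image_card_le _ _) _.
  by exists sval; apply: sval_inj.
have nSB : ~ card_le {x | S x} B.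
  move=> SB; have := card_le_ord_leq (card_le_trans ord_S (card_le_trans SB BM)).
  by rewrite ltnn.
by split=> //; have [|//] := card_le_total B {x | S x}.
Qed.

Lemma chain_finite X m A : ~ finite X -> finite A -> chain m A X.
Proof.
move=> Xinf; elim: m A => [|m IH] A Afin /=.
  have [S [_ AS]] := exists_finite_subtype_gt Xinf Afin.
  exact: card_lt_le_trans AS (card_le_sig S).
have [S [Sfin AS]] := exists_finite_subtype_gt Xinf Afin.
by exists S; split; last exact: IH.
Qed.

(** * Monochromatic grids *)

Lemma pigeonhole (S A : Type) n (f : S -> A) : ~ card_le S (A * 'I_n.+1) ->
  exists c (g : 'I_n.+1 -> S), injective g /\ forall i, f (g i) = c.
Proof.
move=> nle; apply: contrapT => /forallNP fibers; apply: nle.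
have fiber_le c : {k : {s | f s = c} -> 'I_n.+1 | injective k}.
  apply: cid; have [//|[g g_inj]] := card_le_total {s | f s = c} 'I_n.+1.
  case: (fibers c); exists (sval \o g); split=> [i j /sval_inj /g_inj //|i].
  exact: (svalP (g i)).
pose k c s :=
  if pselect (f s = c) is left e then sval (fiber_le c) (exist _ s e) else ord0.
exists (fun s => (f s, k (f s) s)) => s s' [e]; rewrite e /k.
case: pselect => [fs|//]; case: pselect => [fs'|//].
by move/(svalP (fiber_le _))/(congr1 sval).
Qed.

Section Grid.
Variables (d : nat) (X : Type) (x0 : X) (n : nat).

(* The set S offered to the current coordinate is too large for A * 'I_n.+1,
   so n + 1 of its points get the same color; that color together with those
   points is the color, in A * S ^ (n + 1), passed on to the next coordinate. *)
Fixpoint canonizable (m : nat) (A : Type) : Prop :=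
  match m with
  | 0 => exists S : X -> Prop, ~ card_le {x | S x} (A * 'I_n.+1)
  | m'.+1 => exists S : X -> Prop, ~ card_le {x | S x} (A * 'I_n.+1) /\
      canonizable m' (A * (n.+1).-tuple {x | S x})
  end.

Definition grid_point (js : seq 'I_d) (F : 'I_d -> 'I_n.+1 -> X)
  (r : 'I_d -> 'I_n.+1) : 'I_d -> X :=
  fun i => if i \in js then F i (r i) else x0.

Lemma monochromatic_grid m (js : seq 'I_d) (A : Type) :
  size js = m.+1 -> canonizable m A ->
  forall phi : ('I_d -> X) -> A, exists F c,
    (forall j, j \in js -> injective (F j)) /\ forall r, phi (grid_point js F r) = c.
Proof.
elim: m js A => [|m IH] [//|j js] A /= [sz].
  move=> [S nS] phi; case: js sz => // _.
  pose f (s : {x | S x}) := phi (fun i => if i \in [:: j] then sval s else x0).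
  have [c [g [g_inj gc]]] := pigeonhole f nS.
  exists (fun _ i => sval (g i)), c; split=> [_ _ i i' /sval_inj /g_inj //|r].
  rewrite -(gc (r j)) /f /grid_point; congr phi; apply: funext => i.
  by case: ifP => //; rewrite inE => /eqP ->.
move=> [S [nS canS]] phi.
pose upd (q : 'I_d -> X) (v : X) i := if i == j then v else q i.
have fiber q : {cg : A * ('I_n.+1 -> {x | S x}) |
    injective cg.2 /\ forall i, phi (upd q (sval (cg.2 i))) = cg.1}.
  apply: cid; have [c [g [g_inj gc]]] := pigeonhole (fun s => phi (upd q (sval s))) nS.
  by exists (c, g).
pose psi q := ((sval (fiber q)).1, [tuple (sval (fiber q)).2 i | i < n.+1]).
have [F [[c t] [F_inj Fc]]] := IH js _ sz canS psi.
exists (fun i => if i == j then (fun l => sval (tnth t l)) else F i), c; split.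
  move=> i; rewrite inE; case: eqP => [-> _|_ /= i_js]; last exact: F_inj.
  have := Fc (fun _ => ord0); rewrite /psi => -[_ <-] l l'.
  by rewrite !tnth_mktuple => /sval_inj; apply: (proj1 (svalP (fiber _))).
move=> r; pose q := grid_point js F r.
have := Fc r; rewrite /psi => -[<- et].
rewrite -(proj2 (svalP (fiber q)) (r j)); congr phi; apply: funext => i.
rewrite /upd /grid_point inE; case: eqP => [->|_] //=.
by rewrite -et tnth_mktuple.
Qed.

Lemma canonizable_of_chain m (A : Type) :
  ~ finite A -> chain m A X -> canonizable m A.
Proof.
have small S B : ~ finite B -> ~ card_le S B -> ~ card_le S (B * 'I_n.+1).
  by move=> Binf nSB SB; apply/nSB/(card_le_trans SB); apply: card_le_prod_ord.
elim: m A => [|m IH] A Ainf.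
  move=> [_ nXA]; exists (fun _ => True); apply: small => // SA.
  apply/nXA/(card_le_trans _ SA).
  by exists (fun x => exist _ x I) => x y /(congr1 sval).
move=> [S [[AS nSA] ch]]; exists S; split; first exact: small.
have Sinf : ~ finite {x | S x} by move/(finite_card_le AS).
apply: IH.
  apply: contra_not Ainf; apply: finite_card_le.
  by exists (fun a => (a, [tuple infinite_inhabited Sinf | _ < n.+1])) => a b [].
apply: chain_le_base ch; apply: (card_le_prod Sinf AS).
exact: card_le_tuple Sinf (card_le_refl _).
Qed.

Lemma canonizable_of_finite m (A : Type) :
  ~ finite X -> finite A -> canonizable m A.
Proof.
move=> Xinf; elim: m A => [|m IH] A Afin /=;
  have [S [Sfin [_ nS]]] :=
    exists_finite_subtype_gt Xinf (finite_prod Afin (finite_finType 'I_n.+1)).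
  by exists S.
by exists S; split; last exact/IH/finite_prod/finite_tuple.
Qed.

End Grid.

HB.instance Definition _ := SemiGroup.isComLaw.Build nat minn minnA minnC.

Section Distinguisher.
Variables (d : nat) (P : seq (d.-tuple nat)).

Lemma distinguisherP (I : {set 'I_d}) : distinguisher d P I <->
  forall x y, x \in P -> y \in P -> x != y -> exists2 i, i \in I & tnth x i != tnth y i.
Proof.
split=> [/allP dI x y xP yP xy|dI].
  move/allP/(_ y yP): (dI x xP); rewrite (negbTE xy) => /existsP [i /andP [iI ne]].
  by exists i.
apply/allP => x xP; apply/allP => y yP; case: eqVneq => //= xy.
by have [i iI ne] := dI x y xP yP xy; apply/existsP; exists i; rewrite iI.
Qed.

Lemma eP_le (I : {set 'I_d}) : distinguisher d P I -> eP d P <= #|I|.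
Proof. by move=> dI; rewrite /eP (bigD1 I) //= geq_minl. Qed.

Lemma eP_attained : exists2 J, distinguisher d P J & #|J| = eP d P.
Proof.
rewrite /eP; elim/big_ind: _ => [|m m' [J dJ <-] [J' dJ' <-]|J dJ]; last by exists J.
  exists setT; last by rewrite cardsT card_ord.
  apply/distinguisherP => x y _ _ xy.
  have : ~~ [forall i, tnth x i == tnth y i].
    by apply: contra xy => /forallP e; apply/eqP/eq_from_tnth => i; apply/eqP/e.
  by rewrite negb_forall => /existsP [i ne]; exists i; rewrite ?inE.
by case: leqP => _; [exists J | exists J'].
Qed.

End Distinguisher.

Lemma template_two_points d k (P : seq (d.-tuple nat)) : 2 <= k ->
  is_template d k P -> exists x y, [/\ x \in P, y \in P & x != y].
Proof.
move=> k2 [uP sP].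
case: P uP sP => [|x [|y P]] //=; try by move=> _ sP; rewrite -sP in k2.
move=> /andP [xP _] _; exists x, y; split; rewrite ?inE ?eqxx ?orbT //.
by apply: contraNneq xP => ->; rewrite inE eqxx.
Qed.

Lemma template_dim_gt0 d k (P : seq (d.-tuple nat)) : 2 <= k ->
  is_template d k P -> 0 < d.
Proof.
move=> k2 /(template_two_points k2) [x [y [_ _]]].
by case: d {P} x y => // x y; case/eqP; apply: eq_from_tnth => -[].
Qed.

Lemma template_eP_gt0 d k (P : seq (d.-tuple nat)) : 2 <= k ->
  is_template d k P -> 0 < eP d P.
Proof.
move=> k2 /(template_two_points k2) [x [y [xP yP xy]]].
have [J /distinguisherP dJ <-] := eP_attained P.
by have [i iJ _] := dJ x y xP yP xy; apply/card_gt0P; exists i.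
Qed.

Section LowerBound.
Variables (d : nat) (X : Type) (x0 : X) (P : seq (d.-tuple nat)) (J : {set 'I_d}).
Hypothesis dJ : distinguisher d P J.

Lemma grid_template_hom n (F : 'I_d -> 'I_n.+1 -> X) :
  (forall j, j \in J -> injective (F j)) ->
  (forall z i, z \in P -> tnth z i <= n) ->
  template_hom d X P (fun z => grid_point x0 (enum J) F (fun i => inord (tnth z i))).
Proof.
move=> F_inj bound; split=> [z w zP wP fzw|z w i _ _ zw]; last by rewrite /grid_point zw.
apply/eqP; apply: contraT => zw.
have [i iJ /eqP[]] := (distinguisherP _ _).1 dJ z w zP wP zw.
have := congr1 (fun f => f i) fzw.
rewrite /grid_point mem_enum iJ => /(F_inj i iJ) /(congr1 val) /=.
by rewrite !inordK ?ltnS ?bound.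
Qed.

End LowerBound.

Lemma chain_no_proper_coloring d X (Pc : seq (d.-tuple nat) -> Prop) P J C :
  ~ finite X -> Pc P -> distinguisher d P J -> 0 < #|J| ->
  chain #|J|.-1 C X -> ~ has_proper_coloring d X Pc C.
Proof.
move=> Xinf PcP dJ J0 ch [phi proper].
pose x0 := infinite_inhabited Xinf.
pose n := \max_(z <- P) \max_(i < d) tnth z i.
have bound z i : z \in P -> tnth z i <= n.
  move=> zP; have := @leq_bigmax_seq _ P xpredT (fun z => \max_(i < d) tnth z i) z zP isT.
  exact: leq_trans (@leq_bigmax 'I_d (fun i => tnth z i) i).
have canC : canonizable X n #|J|.-1 C.
  have [Cfin|Cinf] := pselect (finite C); first exact: canonizable_of_finite.
  exact: canonizable_of_chain.
have size_J : size (enum J) = #|J|.-1.+1 by rewrite prednK // cardE.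
have [F [c [F_inj Fc]]] := monochromatic_grid x0 size_J canC phi.
pose f z := grid_point x0 (enum J) F (fun i => inord (tnth z i)).
apply: (proper (fun q => exists2 z, z \in P & q = f z)).
  exists P, f; split=> //; split=> //; apply: grid_template_hom => // j.
  by rewrite -mem_enum; apply: F_inj.
by exists c => _ [z _ ->]; apply: Fc.
Qed.

(** * Colorings with small supports *)

(* Two points of the same color c differ on supp c, so supp c distinguishes
   every template with a monochromatic image of color c. *)
Definition supported_coloring (d : nat) (C : Type) (m : nat) (Y : Type) :=
  exists (phi : ('I_d -> Y) -> C) (supp : C -> {set 'I_d}),
    (forall p, #|supp (phi p)| <= m) /\
    forall p q, phi p = phi q -> (forall i, i \in supp (phi p) -> p i = q i) -> p = q.

Section SupportedColoring.
Variable d : nat.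

Lemma supported_coloring_pull m C Y Y' : card_le Y Y' ->
  supported_coloring d C m Y' -> supported_coloring d C m Y.
Proof.
move=> [h h_inj] [phi [supp [supp_le phi_inj]]].
exists (fun p => phi (h \o p)), supp; split=> // p q e agree.
have hpq := phi_inj _ _ e (fun i iS => congr1 h (agree i iS)).
by apply: funext => i; apply/h_inj/(congr1 (fun f => f i) hpq).
Qed.

Lemma supported_coloring_push m C C' Y : card_le C C' ->
  supported_coloring d C m Y -> supported_coloring d C' m Y.
Proof.
move=> [e e_inj] [phi [supp [supp_le phi_inj]]].
pose supp' c' :=
  if pselect (exists c, e c = c') is left h then supp (sval (cid h)) else set0.
have supp'E c : supp' (e c) = supp c.
  rewrite /supp'; case: pselect => [h|[]]; last by exists c.
  by rewrite (e_inj _ _ (svalP (cid h))).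
by exists (e \o phi), supp'; split=> [p|p q /e_inj]; rewrite /= supp'E //; apply: phi_inj.
Qed.

Lemma supported_coloring_small m C Y : ~ finite C -> card_le Y C ->
  supported_coloring d C m Y.
Proof.
move=> Cinf YC; apply: supported_coloring_pull (YC) _.
apply: supported_coloring_push (card_le_fun_ord d Cinf) _.
by exists id, (fun _ => set0); split=> [p|p q -> //]; rewrite cards0.
Qed.

Lemma exists_argmax (Y : Type) (R : Y -> Y -> Prop) (p : 'I_d -> Y) :
  0 < d -> (forall a b, R a b \/ R b a) -> (forall a b c, R a b -> R b c -> R a c) ->
  exists j, forall i, R (p i) (p j).
Proof.
move=> d_gt0 R_total R_trans.
suff [j Hj] : exists j, forall i, i \in enum 'I_d -> R (p i) (p j).
  by exists j => i; apply: Hj; rewrite mem_enum.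
elim: (enum 'I_d) => [|a s [j Hj]]; first by exists (Ordinal d_gt0).
have [aj|ja] := R_total (p a) (p j).
  by exists j => i; rewrite inE => /predU1P [->|/Hj].
exists a => i; rewrite inE => /predU1P [->|/Hj ij]; last exact: R_trans ij ja.
by case: (R_total (p a) (p a)).
Qed.

Lemma card_le_color_code C : ~ finite C -> card_le ('I_d * C * {set 'I_d}) C.
Proof.
move=> Cinf; have [M sets_M] := finite_finType {set 'I_d}.
apply: (card_le_prod Cinf _ (card_le_trans sets_M (card_le_ord _ Cinf))).
exact: card_le_prod Cinf (card_le_ord _ Cinf) (card_le_refl C).
Qed.

Lemma supported_coloring_succ m C (Y : Type) (R : Y -> Y -> Prop) :
  ~ finite C -> 0 < d ->
  (forall a b, R a b \/ R b a) -> (forall a b c, R a b -> R b c -> R a c) ->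
  (forall y, supported_coloring d C m {z | R z y}) -> supported_coloring d C m.+1 Y.
Proof.
move=> Cinf d_gt0 R_total R_trans seg_col.
have R_refl y : R y y by case: (R_total y y).
have [top topP] : {top : ('I_d -> Y) -> 'I_d | forall p i, R (p i) (p (top p))}.
  exists (fun p => sval (cid (exists_argmax p d_gt0 R_total R_trans))) => p.
  exact: svalP (cid (exists_argmax p d_gt0 R_total R_trans)).
have col y : {c : (('I_d -> {z | R z y}) -> C) * (C -> {set 'I_d}) |
    (forall p, #|c.2 (c.1 p)| <= m) /\ forall p q, c.1 p = c.1 q ->
     (forall i, i \in c.2 (c.1 p) -> p i = q i) -> p = q}.
  by apply: cid; have [phi [supp H]] := seg_col y; exists (phi, supp).
pose clamp y z : {z | R z y} :=
  if pselect (R z y) is left h then exist _ z h else exist _ y (R_refl y).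
have clampK y z : R z y -> sval (clamp y z) = z by rewrite /clamp; case: pselect.
(* color p inside the initial segment below its largest coordinate *)
pose color p := let y := p (top p) in let c := (sval (col y)).1 (clamp y \o p) in
  (top p, c, (sval (col y)).2 c).
apply: supported_coloring_push (card_le_color_code Cinf) _.
exists color, (fun t => t.1.1 |: t.2); split=> [p|p q].
  have := proj1 (svalP (col (p (top p)))) (clamp (p (top p)) \o p).
  by rewrite cardsU1; case: (_ \notin _); rewrite ?add1n ?add0n ?ltnS // => /leqW.
rewrite /color /=; set yp := p (top p) => -[e_top e_col _] agree.
have e_y : yp = q (top q) by rewrite -e_top; apply: agree; rewrite setU11.
rewrite -e_y in e_col.
have clamp_eq : clamp yp \o p = clamp yp \o q.
  apply: (proj2 (svalP (col yp))) e_col _ => i i_supp.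
  by rewrite /= agree //; apply/setU1P; right.
apply: funext => i; rewrite -(clampK yp (p i) (topP p i)) -(clampK yp (q i)).
  exact: (congr1 (fun f => sval (f i)) clamp_eq).
by rewrite e_y; apply: topP.
Qed.

End SupportedColoring.

Section WellOrder.
Variables (T : eqType) (R : rel T).
Hypothesis Rwo : wochoice.well_order R.

Let R_chain : wochoice.wo_chain R predT := fun A _ => @Rwo A.

Lemma well_order_total : total R.
Proof. by move=> x y; apply: (wochoice.wo_chainW R_chain). Qed.

Lemma well_order_antisym : antisymmetric R.
Proof. by move=> x y; apply: (wochoice.wo_chain_antisymmetric R_chain). Qed.

Lemma well_order_min (B : {pred T}) :
  (exists x, x \in B) -> exists2 z, z \in B & forall w, w \in B -> R z w.
Proof. by move=> /Rwo [z [[zB zmin] _]]; exists z => // w /zmin. Qed.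

Lemma well_order_trans : transitive R.
Proof.
move=> b a c ab bc; have [|z] := @well_order_min (mem [:: a; b; c]).
  by exists a; rewrite mem_head.
rewrite !inE => /or3P [] /eqP -> zmin; first by apply: zmin; rewrite !inE eqxx !orbT.
  have ba : R b a by apply: zmin; rewrite !inE eqxx.
  by rewrite (@well_order_antisym a b) // ab ba.
have cb : R c b by apply: zmin; rewrite !inE eqxx !orbT.
by rewrite -(@well_order_antisym b c) // bc cb.
Qed.

End WellOrder.

Lemma exists_small_initial_segments Y : ~ finite Y ->
  exists (Y' : Type) (R : Y' -> Y' -> Prop),
  [/\ card_le Y Y', card_le Y' Y, (forall a b, R a b \/ R b a),
      (forall a b c, R a b -> R b c -> R a c) & forall y, ~ card_le Y' {z | R z y}].
Proof.
move=> Yinf; pose W := {classic Y}.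
have [R Rwo] := wochoice.well_ordering_principle W.
have R_total a b : R a b \/ R b a by apply/orP/well_order_total.
have R_trans a b c : R a b -> R b c -> R a c by apply: well_order_trans.
(* cut the well order at the least point whose initial segment is as large as Y *)
pose large : {pred W} := fun y => `[< card_le Y {z : W | R z y} >].
have [[y y_large]|no_large] := pselect (exists y, y \in large); last first.
  exists W, R; split=> //; [exact: card_le_refl | exact: card_le_refl |].
  by move=> y le; apply: no_large; exists y; apply/asboolP.
have [y0 /asboolP Y_y0 y0_min] := well_order_min Rwo (ex_intro _ y y_large).
pose Y' := {z : W | R z y0 && (z != y0)}.
have seg_option : card_le {z : W | R z y0} (option Y').
  pose inY' z (h : z <> y0) (zy0 : R z y0) : Y' :=
    exist _ z (introT andP (conj zy0 (introN eqP h))).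
  exists (fun z => if pselect (sval z = y0) is right h then Some (inY' _ h (svalP z))
    else None).
  move=> [z zy0] [w wy0] /=; case: pselect => [e1|n1]; case: pselect => [e2|n2] //=.
    by move=> _; apply: sval_inj; rewrite /= e1 e2.
  by move=> [e]; apply: sval_inj.
have Y'inf : ~ finite Y'.
  by move/finite_option/(finite_card_le seg_option)/(finite_card_le Y_y0).
have YY' := card_le_trans Y_y0 (card_le_trans seg_option (card_le_option Y'inf)).
exists Y', (fun a b => R (sval a) (sval b)); split.
- exact: YY'.
- exact: card_le_sig.
- by move=> a b; apply: R_total.
- by move=> a b c; apply: R_trans.
move=> z Y'_z; case/andP: (svalP z) => z_y0 /eqP []; apply: (well_order_antisym Rwo).
rewrite z_y0 y0_min //; apply/asboolP; apply: card_le_trans YY' (card_le_trans Y'_z _).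
exists (fun w => exist (fun x : W => R x (sval z)) (sval (sval w)) (svalP w)).
by move=> [[a ha] ra] [[b hb] rb] /(congr1 sval) /= e; apply/sval_inj/sval_inj.
Qed.

Lemma supported_coloring_of_not_chain d C m Y : ~ finite C -> 0 < d ->
  ~ chain m C Y -> supported_coloring d C m Y.
Proof.
move=> Cinf d_gt0; elim: m Y => [|m IH] Y notch.
  exact/supported_coloring_small/card_le_of_not_lt.
have [YC|nYC] := pselect (card_le Y C); first exact: supported_coloring_small.
have CY : card_le C Y by have [|/nYC] := card_le_total C Y.
have [Y' [R [YY' Y'Y R_total R_trans small_seg]]] :=
  exists_small_initial_segments (fun Yfin => Cinf (finite_card_le CY Yfin)).
apply: supported_coloring_pull YY' _; apply: supported_coloring_succ => // y.
apply: IH => ch; apply/notch/(chain_le_top Y'Y)/(chain_extend ch).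
by split; [apply: card_le_sig | apply: small_seg].
Qed.

Lemma proper_coloring_of_not_chain d X (Pc : seq (d.-tuple nat) -> Prop) C e :
  ~ finite X -> 0 < d -> 0 < e -> (forall P, Pc P -> e <= eP d P) ->
  ~ chain e.-1 C X -> has_proper_coloring d X Pc C.
Proof.
move=> Xinf d_gt0 e_gt0 e_min notch.
have Cinf : ~ finite C by move=> Cfin; apply/notch/chain_finite.
have [phi [supp [supp_le phi_inj]]] := supported_coloring_of_not_chain Cinf d_gt0 notch.
exists phi => Q [P [f [PcP [[f_inj f_hom] Qf]]]] [c mono].
have monoP z : z \in P -> phi (f z) = c by move=> zP; apply/mono/Qf; exists z.
have dist : distinguisher d P (supp c).
  apply/distinguisherP => z w zP wP /eqP zw; apply: contrapT => nsep; apply: zw.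
  apply: f_inj => //; apply: phi_inj; rewrite ?monoP // => i i_supp.
  apply: f_hom => //; apply: contrapT => ne; apply: nsep; exists i => //; exact/eqP.
have : eP d P <= e.-1.
  case: P {PcP Qf f_inj f_hom} monoP dist => [|z0 P] monoP dist.
    by apply: leq_trans (@eP_le d [::] set0 isT) _; rewrite cards0.
  by apply: leq_trans (eP_le dist) _; rewrite -(monoP z0) ?mem_head.
by rewrite leqNgt prednK ?e_min.
Qed.

Theorem corollary2p2 (d k : nat) (X : Type) (Pc : seq (d.-tuple nat) -> Prop) :
  2 <= k ->
  (forall P, Pc P -> is_template d k P) ->
  infinite X ->
  ((forall P, ~ Pc P) ->
     forall C : Type, has_proper_coloring d X Pc C <-> inhabited C) /\
  (forall e : nat,
     (exists P, Pc P /\ eP d P = e) ->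
     (forall P, Pc P -> e <= eP d P) ->
     forall C : Type, has_proper_coloring d X Pc C <-> ~ chain (e - 1) C X).
Proof.
move=> k2 templ /infinite_not_finite Xinf.
split=> [noP C|_ [P [PcP <-]] e_min C].
  split=> [[phi _]|[c]]; first exact: inhabits (phi (fun _ => infinite_inhabited Xinf)).
  by exists (fun _ => c) => Q [P [f [/noP]]].
have eP_gt0 := template_eP_gt0 k2 (templ P PcP).
have [J dJ cardJ] := eP_attained P.
rewrite subn1; split=> [col ch|].
  by apply: (chain_no_proper_coloring Xinf PcP dJ _ _ col); rewrite cardJ.
exact: proper_coloring_of_not_chain Xinf (template_dim_gt0 k2 (templ P PcP)) eP_gt0 e_min.
Qed.
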